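(* Let $n$ be even, and for $m\ge1$ let $\mathcal{C}_m=\mathbb{C}\{e_1,\dots,e_m\}$ denote the complex Clifford algebra with generators satisfying $e_j^2=-1$, $e_je_k=-e_ke_j$ ($j\ne k$), of dimension $2^m$, with $\mathcal{C}_n\subset\mathcal{C}_{n+2}$ naturally. Suppose there is an invertible $2^{n/2}\times2^{n/2}$ matrix $P_n$ over $\mathcal{C}_n$, not depending on $a$, such that for every $a\in\mathcal{C}_n$ the matrix $\phi_n(a):=P_n(aI_{2^{n/2}})P_n^{-1}$ has all entries in $\mathbb{C}$. Let $e_{[n]}=e_1\cdots e_n$, $e_{[n+1]}=e_1\cdots e_{n+1}=e_{[n]}e_{n+1}$, $\mu_{n+2}=(e_{[n]}e_{n+1})(e_{[n]}e_{n+2})$ and $r=(-1)^{\frac12(n+1)(n+2)}$; then $(e_{[n]}e_{n+1})^2=(e_{[n]}e_{n+2})^2=r$ and $\mu_{n+2}=-(e_{[n]}e_{n+2})(e_{[n]}e_{n+1})$. Fix a square root $\sqrt r\in\mathbb{C}$. Then every $a\in\mathcal{C}_{n+2}$ can be written as $$a=a_0+a_1e_{[n]}e_{n+1}+a_2e_{[n]}e_{n+2}+a_3\mu_{n+2}$$ with $a_0,\dots,a_3\in\mathcal{C}_n$. Let $N=2^{(n+2)/2}$ and $$P_{n+2}=\frac12\begin{pmatrix}(1+\frac1{\sqrt r}e_{[n+1]})P_n & (e_{[n]}e_{n+2}-\frac1{\sqrt r}\mu_{n+2})P_n\\ \frac1r(e_{[n]}e_{n+2}+\frac1{\sqrt r}\mu_{n+2})P_n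 & (1-\frac1{\sqrt r}e_{[n+1]})P_n\end{pmatrix},$$ $$P_{n+2}'=\frac12\begin{pmatrix}P_n^{-1}(1+\frac1{\sqrt r}e_{[n+1]}) & P_n^{-1}(e_{[n]}e_{n+2}-\frac1{\sqrt r}\mu_{n+2})\\ P_n^{-1}\frac1r(e_{[n]}e_{n+2}+\frac1{\sqrt r}\mu_{n+2}) & P_n^{-1}(1-\frac1{\sqrt r}e_{[n+1]})\end{pmatrix}.$$ Then $P_{n+2}$ is invertible with $P_{n+2}^{-1}=P_{n+2}'$, and $$P_{n+2}(aI_N)P_{n+2}^{-1}=\begin{pmatrix}\phi_n(a_0)+\sqrt r\,\phi_n(a_1) & r[\phi_n(a_2)+\sqrt r\,\phi_n(a_3)]\\ \phi_n(a_2)-\sqrt r\,\phi_n(a_3) & \phi_n(a_0)-\sqrt r\,\phi_n(a_1)\end{pmatrix}\in\mathbb{C}^{N\times N}.$$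
   Context: For an element $c$ and a matrix $M$, $cM$ (resp. $Mc$) denotes the matrix with entries $cM_{jk}$ (resp. $M_{jk}c$). Complex scalars commute with all Clifford elements. *)

From mathcomp Require Import all_boot all_algebra.
From mathcomp Require Import Rstruct complex.
Set Implicit Arguments. Unset Strict Implicit. Unset Printing Implicit Defensive.
Import GRing.Theory Num.Theory.
Local Open Scope ring_scope.

Definition Cplx : numClosedFieldType := (Rdefinitions.R)[i].

(* The complex Clifford algebra C_m = C{e_1,...,e_m}: an element is its family
   of coefficients on the basis blades e_A = e_{a_1} ... e_{a_k}
   (A = {a_1 < ... < a_k} a subset of {0..m-1}; generator e_{j+1} is index j). *)
Definition clif (m : nat) := {ffun {set 'I_m} -> Cplx}.

(* e_A e_B = clif_sign A B * e_(A symmetric-difference B), from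
   e_j^2 = -1 and e_j e_k = - e_k e_j (j <> k). *)
Definition clif_sign (m : nat) (A B : {set 'I_m}) : Cplx :=
  (-1) ^+ (#|[set p : 'I_m * 'I_m | (p.1 \in A) && (p.2 \in B) && (p.2 < p.1)%N]|
           + #|A :&: B|).

Definition symdiff (m : nat) (A B : {set 'I_m}) : {set 'I_m} :=
  (A :\: B) :|: (B :\: A).

Definition cmul (m : nat) (x y : clif m) : clif m :=
  [ffun S => \sum_(A : {set 'I_m}) \sum_(B : {set 'I_m} | symdiff A B == S)
                clif_sign A B * x A * y B].

Definition cscal (m : nat) (c : Cplx) : clif m :=
  [ffun S => if S == set0 then c else 0].
Definition cone (m : nat) : clif m := cscal m 1.
Definition cgen (m : nat) (j : 'I_m) : clif m :=
  [ffun S => if S == [set j] then 1 else 0].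

Definition is_cscal (m : nat) (x : clif m) : Prop := x = cscal m (x set0).
Definition cpart (m : nat) (x : clif m) : Cplx := x set0.

Definition ebig (n k : nat) : clif n.+2 :=
  foldr (@cmul n.+2) (cone n.+2) [seq cgen (inord i : 'I_n.+2) | i <- iota 0 k].
Definition egen (n j : nat) : clif n.+2 := cgen (inord j.-1 : 'I_n.+2).

Definition lift_clif (n : nat) (x : clif n) : clif n.+2 :=
  [ffun S : {set 'I_n.+2} =>
     if S \subset [set widen_ord (leqW (leqnSn n)) i | i : 'I_n]
     then x [set i : 'I_n | widen_ord (leqW (leqnSn n)) i \in S] else 0].

Definition cmxmul (m a b c : nat) (A : 'M[clif m]_(a, b)) (B : 'M[clif m]_(b, c))
  : 'M[clif m]_(a, c) :=
  \matrix_(i, j) \sum_(l < b) cmul (A i l) (B l j).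
Definition cmx_scalar (m k : nat) (x : clif m) : 'M[clif m]_k :=
  \matrix_(i, j) if i == j then x else 0.
Definition cmx1 (m k : nat) : 'M[clif m]_k := cmx_scalar k (cone m).
Definition cmx_lmul (m a b : nat) (c : clif m) (M : 'M[clif m]_(a, b)) :=
  map_mx (cmul c) M.
Definition cmx_rmul (m a b : nat) (M : 'M[clif m]_(a, b)) (c : clif m) :=
  map_mx (fun x => cmul x c) M.
Definition cmx_inverse (m k : nat) (P Q : 'M[clif m]_k) : Prop :=
  cmxmul P Q = cmx1 m k /\ cmxmul Q P = cmx1 m k.

Definition phi (n k : nat) (P Pinv : 'M[clif n]_k) (a : clif n) : 'M[Cplx]_k :=
  map_mx (@cpart n) (cmxmul (cmxmul P (cmx_scalar k a)) Pinv).

Definition rsign (n : nat) : Cplx := (-1) ^+ (((n.+1) * (n.+2))./2).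

Definition f1 (n : nat) : clif n.+2 := cmul (ebig n n) (egen n n.+1).
Definition f2 (n : nat) : clif n.+2 := cmul (ebig n n) (egen n n.+2).
Definition mu (n : nat) : clif n.+2 := cmul (f1 n) (f2 n).

Definition Pnext (n : nat) (s : Cplx) (Pn : 'M[clif n]_(2 ^ n./2))
  : 'M[clif n.+2]_(2 ^ n./2 + 2 ^ n./2) :=
  let P := map_mx (@lift_clif n) Pn in
  let ks := cscal n.+2 s^-1 in
  let ir := cscal n.+2 (rsign n)^-1 in
  cmx_lmul (cscal n.+2 2^-1)
    (block_mx
       (cmx_lmul (cone _ + cmul ks (ebig n n.+1)) P)
       (cmx_lmul (f2 n - cmul ks (mu n)) P)
       (cmx_lmul (cmul ir (f2 n + cmul ks (mu n))) P)
       (cmx_lmul (cone _ - cmul ks (ebig n n.+1)) P)).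

Definition Pprime (n : nat) (s : Cplx) (Pninv : 'M[clif n]_(2 ^ n./2))
  : 'M[clif n.+2]_(2 ^ n./2 + 2 ^ n./2) :=
  let Q := map_mx (@lift_clif n) Pninv in
  let ks := cscal n.+2 s^-1 in
  let ir := cscal n.+2 (rsign n)^-1 in
  cmx_lmul (cscal n.+2 2^-1)
    (block_mx
       (cmx_rmul Q (cone _ + cmul ks (ebig n n.+1)))
       (cmx_rmul Q (f2 n - cmul ks (mu n)))
       (cmx_rmul Q (cmul ir (f2 n + cmul ks (mu n))))
       (cmx_rmul Q (cone _ - cmul ks (ebig n n.+1)))).

(* For even n, the elements f1 = e_[n]e_(n+1) and f2 = e_[n]e_(n+2) are blades
   of odd length n+1 containing e_[n]; hence they commute with C_n, square to r
   and anticommute.  So 1, f1, f2 and mu = f1 f2 span a split quaternion algebra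
   H_r commuting with C_n, and every blade of C_(n+2) is a blade of C_n times
   one of 1, f1, f2, mu up to sign: C_(n+2) = C_n H_r.  The four coefficients
   of P_(n+2) and P'_(n+2) lie in H_r, and conjugating the C_n-components a_i of
   a by P_n turns them into the complex scalars phi_n(a_i).  Both the inverse
   property and the block formula therefore reduce to identities between
   products of the coefficients in H_r, which are checked coordinatewise. *)

From mathcomp Require Import all_boot all_algebra.
From mathcomp Require Import Rstruct complex.
From mathcomp Require Import ring.
Set Implicit Arguments. Unset Strict Implicit. Unset Printing Implicit Defensive.
Import GRing.Theory Num.Theory.
Local Open Scope ring_scope.

(** * The Clifford product *)

Section Clifford.

Variable m : nat.
Implicit Types (A B C K S U : {set 'I_m}) (x y z : clif m) (c : Cplx).

Lemma clifZE c x S : (c *: x) S = c * x S.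
Proof. by rewrite ffunE. Qed.

Lemma in_symdiff A B i : (i \in symdiff A B) = (i \in A) (+) (i \in B).
Proof. by rewrite !inE; case: (i \in A); case: (i \in B). Qed.

Lemma symdiffC A B : symdiff A B = symdiff B A.
Proof. by apply/setP => i; rewrite !in_symdiff addbC. Qed.

Lemma symdiffK A B : symdiff A (symdiff A B) = B.
Proof. by apply/setP => i; rewrite !in_symdiff addKb. Qed.

Lemma symdiffKr A B : symdiff (symdiff A B) B = A.
Proof. by apply/setP => i; rewrite !in_symdiff addbK. Qed.

Lemma symdiffKl A B : symdiff (symdiff A B) A = B.
Proof. by apply/setP => i; rewrite !in_symdiff addbAC addbb. Qed.

Lemma symdiff0 A : symdiff A set0 = A.
Proof. by apply/setP => i; rewrite !in_symdiff inE addbF. Qed.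

Lemma symdiffvv A : symdiff A A = set0.
Proof. by apply/setP => i; rewrite !in_symdiff inE addbb. Qed.

Lemma symdiff_cancel A B C : symdiff (symdiff A B) (symdiff A C) = symdiff B C.
Proof. by apply/setP => i; rewrite !in_symdiff addbACA addbb. Qed.

Lemma symdiff_trans A B C : symdiff (symdiff A B) (symdiff B C) = symdiff A C.
Proof. by apply/setP => i; rewrite !in_symdiff addbA addbK. Qed.

Lemma symdiff_eq A B S : (symdiff A B == S) = (B == symdiff A S).
Proof. by apply/eqP/eqP => [<-|->]; rewrite symdiffK. Qed.

(* [swap_sign a b] is the sign picked up when [e_b] is moved leftwards past
   [e_a]; the case [a = b] accounts for [e_a ^+ 2 = -1]. *)
Definition swap_sign (a b : 'I_m) : Cplx := if (b <= a)%N then -1 else 1.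

Lemma swap_sign_sqr a b : swap_sign a b * swap_sign a b = 1.
Proof. by rewrite /swap_sign; case: ifP; rewrite ?mulrNN mulr1. Qed.

Lemma clif_signE A B :
  clif_sign A B = \prod_(a in A) \prod_(b in B) swap_sign a b.
Proof.
have lt_sign : \prod_(p in [set p : 'I_m * 'I_m | (p.1 \in A) && (p.2 \in B)
                                               && (p.2 < p.1)%N]) (-1 : Cplx)
             = \prod_(a in A) \prod_(b in B) (if (b < a)%N then -1 else 1).
  rewrite pair_big_dep /= big_mkcond [RHS]big_mkcond /=; apply: eq_bigr => p _.
  by rewrite inE; case: (p.1 \in A); case: (p.2 \in B); case: (p.2 < p.1)%N.
have eq_sign : \prod_(a in A :&: B) (-1 : Cplx)
             = \prod_(a in A) \prod_(b in B) (if a == b then -1 else 1).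
  rewrite [RHS](eq_bigr (fun a => if a \in B then -1 else 1)); last first.
    move=> a _; rewrite -big_mkcondr /=.
    case: (boolP (a \in B)) => aB.
      by rewrite (big_pred1 a) // => b /=; rewrite (eq_sym a); case: eqP => [->|];
        rewrite ?aB ?andbF.
    by rewrite big1 // => b /andP[bB /eqP ab]; move: aB; rewrite ab bB.
  by rewrite -big_mkcondr /=; apply: eq_bigl => a; rewrite inE.
rewrite /clif_sign exprD -!prodr_const lt_sign eq_sign -big_split /=.
apply: eq_bigr => a _; rewrite -big_split /=; apply: eq_bigr => b _.
rewrite /swap_sign; have [->|ab] := eqVneq a b; first by rewrite ltnn leqnn mul1r.
have ba : (b == a :> nat) = false by apply/eqP => /val_inj ba; rewrite ba eqxx in ab.
by rewrite mulr1 [(b <= a)%N]leq_eqVlt ba.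
Qed.

Lemma prod_symdiff (f : 'I_m -> Cplx) A B : (forall i, f i * f i = 1) ->
  \prod_(i in symdiff A B) f i = \prod_(i in A) f i * \prod_(i in B) f i.
Proof.
move=> f_sqr; rewrite big_mkcond [X in X * _]big_mkcond [X in _ * X]big_mkcond.
rewrite -big_split /=; apply: eq_bigr => i _; rewrite in_symdiff.
by case: (i \in A); case: (i \in B); rewrite /= ?mulr1 ?mul1r ?f_sqr.
Qed.

Lemma clif_sign_symdiffl A B C :
  clif_sign (symdiff A B) C = clif_sign A C * clif_sign B C.
Proof.
rewrite !clif_signE prod_symdiff // => a; rewrite -big_split /=.
by apply: big1 => b _; apply: swap_sign_sqr.
Qed.

Lemma clif_sign_symdiffr A B C :
  clif_sign A (symdiff B C) = clif_sign A B * clif_sign A C.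
Proof.
rewrite !clif_signE -big_split /=; apply: eq_bigr => a _.
by apply: prod_symdiff => b; apply: swap_sign_sqr.
Qed.

Lemma clif_sign_sqr A B : clif_sign A B * clif_sign A B = 1.
Proof.
rewrite clif_signE -big_split /=; apply: big1 => a _; rewrite -big_split /=.
by apply: big1 => b _; apply: swap_sign_sqr.
Qed.

Lemma clif_sign0l B : clif_sign set0 B = 1.
Proof. by rewrite clif_signE big_set0. Qed.

Lemma clif_sign0r A : clif_sign A set0 = 1.
Proof. by rewrite clif_signE big1 // => a _; rewrite big_set0. Qed.

Lemma clif_sign_set1 (a b : 'I_m) : clif_sign [set a] [set b] = swap_sign a b.
Proof. by rewrite clif_signE !big_set1. Qed.

Lemma clif_sign_cocycle A B C :
  clif_sign A B * clif_sign (symdiff A B) C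
  = clif_sign B C * clif_sign A (symdiff B C).
Proof. by rewrite clif_sign_symdiffl clif_sign_symdiffr; ring. Qed.

(* Each generator [e_u] of [e_U] anticommutes with the [#|K| - 1] generators of
   [e_K] other than itself, an even number of them. *)
Lemma clif_sign_comm U K : U \subset K -> odd #|K| ->
  clif_sign U K = clif_sign K U.
Proof.
move=> UK oddK.
suff sign_pair : clif_sign U K * clif_sign K U = 1.
  by rewrite -[LHS]mulr1 -(clif_sign_sqr K U) mulrA sign_pair mul1r.
rewrite !clif_signE [X in _ * X]exchange_big -big_split /=.
apply: big1 => u uU; rewrite -big_split /=.
have uK : u \in K by apply: (subsetP UK).
rewrite (big_setD1 u uK) /= /swap_sign leqnn mulrNN mulr1 mul1r.
rewrite (eq_bigr (fun _ => -1)); last first.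
  move=> k; rewrite !inE => /andP[ku _].
  have : (u : nat) != k by apply: contra ku => /eqP/val_inj ->.
  by case: ltngtP; rewrite ?mulrN1 ?mulN1r ?opprK.
rewrite prodr_const -signr_odd.
by move: oddK; rewrite (cardsD1 u K) uK add1n /= => /negbTE ->.
Qed.

Lemma cmulE x y S :
  cmul x y S = \sum_A clif_sign A (symdiff A S) * x A * y (symdiff A S).
Proof.
rewrite ffunE; apply: eq_bigr => A _.
by rewrite (eq_bigl (pred1 (symdiff A S))) ?big_pred1_eq // => B; rewrite symdiff_eq.
Qed.

Lemma cmulDl x y z : cmul (x + y) z = cmul x z + cmul y z.
Proof.
by apply/ffunP => S; rewrite [in RHS]ffunE !cmulE -big_split /=; apply: eq_bigr => A _;
  rewrite ffunE; ring.
Qed.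

Lemma cmulDr x y z : cmul x (y + z) = cmul x y + cmul x z.
Proof.
by apply/ffunP => S; rewrite [in RHS]ffunE !cmulE -big_split /=; apply: eq_bigr => A _;
  rewrite ffunE; ring.
Qed.

Lemma cmulZl c x y : cmul (c *: x) y = c *: cmul x y.
Proof.
by apply/ffunP => S; rewrite clifZE !cmulE mulr_sumr; apply: eq_bigr => A _;
  rewrite clifZE; ring.
Qed.

Lemma cmulZr c x y : cmul x (c *: y) = c *: cmul x y.
Proof.
by apply/ffunP => S; rewrite clifZE !cmulE mulr_sumr; apply: eq_bigr => A _;
  rewrite clifZE; ring.
Qed.

Lemma cmul0l x : cmul 0 x = 0.
Proof. by apply: (addrI (cmul 0 x)); rewrite -cmulDl !addr0. Qed.

Lemma cmul0r x : cmul x 0 = 0.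
Proof. by apply: (addrI (cmul x 0)); rewrite -cmulDr !addr0. Qed.

Lemma cmulNl x y : cmul (- x) y = - cmul x y.
Proof. by rewrite -(scaleN1r x) cmulZl scaleN1r. Qed.

Lemma cmulNr x y : cmul x (- y) = - cmul x y.
Proof. by rewrite -(scaleN1r y) cmulZr scaleN1r. Qed.

Lemma cmul_suml I r (P : pred I) (F : I -> clif m) y :
  cmul (\sum_(i <- r | P i) F i) y = \sum_(i <- r | P i) cmul (F i) y.
Proof. by apply: (big_morph (fun x => cmul x y)) => [x z|]; rewrite ?cmulDl ?cmul0l. Qed.

Lemma cmul_sumr I r (P : pred I) (F : I -> clif m) x :
  cmul x (\sum_(i <- r | P i) F i) = \sum_(i <- r | P i) cmul x (F i).
Proof. by apply: (big_morph (cmul x)) => [y z|]; rewrite ?cmulDr ?cmul0r. Qed.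

Lemma cmulA x y z : cmul x (cmul y z) = cmul (cmul x y) z.
Proof.
apply/ffunP => S; rewrite !cmulE.
under eq_bigr do rewrite cmulE mulr_sumr.
under [RHS]eq_bigr do rewrite cmulE mulr_sumr mulr_suml.
rewrite [RHS]exchange_big /=; apply: eq_bigr => A _.
rewrite (reindex (symdiff A)); last by exists (symdiff A) => B _; rewrite symdiffK.
apply: eq_bigr => B _; rewrite symdiff_cancel.
have := clif_sign_cocycle A (symdiff A B) (symdiff B S).
rewrite symdiffK symdiff_trans => cocycle.
have reorder (a b c d u v w : Cplx) :
  d * c = b * a -> a * u * (b * v * w) = c * (d * u * v) * w.
  by move=> dc_ba; transitivity (b * a * u * v * w); [ring | rewrite -dc_ba; ring].
exact: reorder.
Qed.

Definition blade K : clif m := [ffun S => if S == K then 1 else 0].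

Lemma cmul_bladel K x S :
  cmul (blade K) x S = clif_sign K (symdiff K S) * x (symdiff K S).
Proof.
rewrite cmulE (bigD1 K) //= ffunE eqxx mulr1 big1 ?addr0 // => A /negbTE AK.
by rewrite ffunE AK mulr0 mul0r.
Qed.

Lemma cmul_blader K x S :
  cmul x (blade K) S = clif_sign (symdiff S K) K * x (symdiff S K).
Proof.
rewrite cmulE (bigD1 (symdiff S K)) //= symdiffKl ffunE eqxx mulr1.
rewrite big1 ?addr0 // => A AS; rewrite ffunE; case: eqP => [KA|_]; last first.
  by rewrite mulr0.
case/eqP: AS; rewrite -KA; apply/setP => i.
by rewrite !in_symdiff addbCA addbb addbF.
Qed.

Lemma blade_mul A B :
  cmul (blade A) (blade B) = clif_sign A B *: blade (symdiff A B).
Proof.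
apply/ffunP => S; rewrite cmul_bladel clifZE !ffunE symdiff_eq.
by case: eqP => [->|_]; rewrite ?symdiffK ?mulr1 ?mulr0.
Qed.

Lemma cone_blade : cone m = blade set0.
Proof. by []. Qed.

Lemma cgen_blade (j : 'I_m) : cgen j = blade [set j].
Proof. by []. Qed.

Lemma cmul1l x : cmul (cone m) x = x.
Proof.
by apply/ffunP => S; rewrite cmul_bladel clif_sign0l mul1r symdiffC symdiff0.
Qed.

Lemma cmul1r x : cmul x (cone m) = x.
Proof. by apply/ffunP => S; rewrite cmul_blader clif_sign0r mul1r symdiff0. Qed.

Lemma cscalE c : cscal m c = c *: cone m.
Proof. by apply/ffunP => S; rewrite clifZE /cone !ffunE; case: eqP; rewrite ?mulr1 ?mulr0. Qed.

Lemma cmul_cscall c x : cmul (cscal m c) x = c *: x.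
Proof. by rewrite cscalE cmulZl cmul1l. Qed.

Lemma cmul_cscalr c x : cmul x (cscal m c) = c *: x.
Proof. by rewrite cscalE cmulZr cmul1r. Qed.

Lemma clif_blade_expand x : x = \sum_S x S *: blade S.
Proof.
(* The coefficients are abstracted: matching [_ *: _] against an unfolded
   coefficient [x T] is very slow. *)
apply/ffunP => T; rewrite sum_ffunE (bigD1 T) //= big1 ?addr0 => [|S /negbTE ST].
  by move: (x T) => c; rewrite clifZE ffunE eqxx mulr1.
by move: (x S) => c; rewrite clifZE ffunE eq_sym ST mulr0.
Qed.

Lemma cmul_blade_comm K x : (forall S, x S != 0 -> S \subset K) -> odd #|K| ->
  cmul x (blade K) = cmul (blade K) x.
Proof.
move=> suppK oddK; apply/ffunP => S; rewrite cmul_blader cmul_bladel symdiffC.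
have [->|/suppK UK] := eqVneq (x (symdiff K S)) 0; first by rewrite !mulr0.
by rewrite clif_sign_comm.
Qed.

End Clifford.

Definition initseg m k : {set 'I_m} := [set i : 'I_m | (i < k)%N].

Lemma card_initseg m k : (k <= m)%N -> #|initseg m k| = k.
Proof.
move=> km; rewrite -sum1_card (eq_bigl (fun i : 'I_m => (i < k)%N)) => [|i]; last first.
  by rewrite inE.
by rewrite -(big_ord_widen m (fun _ => 1%N)) // sum1_card card_ord.
Qed.

Lemma initsegS m k : (k <= m)%N ->
  initseg m.+1 k.+1 = symdiff (initseg m.+1 k) [set inord k].
Proof.
move=> km; apply/setP => i; rewrite in_symdiff !inE -val_eqE /= inordK //.
by rewrite ltnS leq_eqVlt; case: ltngtP.
Qed.

Lemma clif_sign_initseg_set1 m k (j : 'I_m) : (k <= j)%N ->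
  clif_sign (initseg m k) [set j] = 1.
Proof.
move=> kj; rewrite clif_signE big1 // => a; rewrite inE big_set1 /swap_sign => ak.
by rewrite leqNgt (leq_trans ak kj).
Qed.

Lemma clif_sign_set1_initseg m k (j : 'I_m) : (k <= j)%N ->
  clif_sign [set j] (initseg m k) = (-1) ^+ k.
Proof.
move=> kj; rewrite clif_signE big_set1 (eq_bigr (fun _ => -1)) => [|b].
  by rewrite prodr_const card_initseg // (leq_trans kj (ltnW (ltn_ord j))).
by rewrite inE /swap_sign => bk; rewrite ltnW // (leq_trans bk kj).
Qed.

Lemma half_triangularS k : (k.+1 * k.+2)./2 = ((k * k.+1)./2 + k.+1)%N.
Proof.
have -> : (k.+1 * k.+2 = k * k.+1 + (k.+1).*2)%N.
  by rewrite -muln2 [(k * _)%N]mulnC -mulnDr addn2.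
by rewrite halfD odd_double andbF add0n doubleK.
Qed.

Lemma clif_sign_initseg m k : (k <= m)%N ->
  clif_sign (initseg m.+1 k) (initseg m.+1 k) = (-1) ^+ (k * k.+1)./2.
Proof.
elim: k => [|k IHk] km; first by rewrite clif_signE big_pred0 // => i; rewrite inE.
have kj : (k <= (inord k : 'I_m.+1))%N by rewrite inordK // ltnS ltnW.
rewrite (initsegS (ltnW km)) clif_sign_symdiffl !clif_sign_symdiffr (IHk (ltnW km)).
rewrite clif_sign_initseg_set1 // clif_sign_set1_initseg // clif_sign_set1 /swap_sign.
by rewrite leqnn half_triangularS exprD exprS; ring.
Qed.

Lemma ebigS n k : ebig n k.+1 = cmul (ebig n k) (cgen (inord k : 'I_n.+2)).
Proof.
have foldr_cmul (s : seq (clif n.+2)) z :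
    foldr (@cmul _) z s = cmul (foldr (@cmul _) (cone _) s) z.
  by elim: s => [|x s IHs] /=; rewrite ?cmul1l // IHs cmulA.
by rewrite /ebig -[k.+1]addn1 iotaD map_cat foldr_cat /= foldr_cmul cmul1r.
Qed.

Lemma ebig_blade n k : (k <= n.+2)%N -> ebig n k = blade (initseg n.+2 k).
Proof.
elim: k => [|k IHk] kn; first by congr blade; apply/setP => i; rewrite !inE.
rewrite ebigS (IHk (ltnW kn)) blade_mul clif_sign_initseg_set1 ?inordK //.
by rewrite scale1r initsegS.
Qed.

Section ExtraGenerators.

Variable n : nat.
Implicit Types (j k : 'I_n.+2) (x : clif n.+2).

(* [e_[n] e_(j+1)], for [j = n, n+1], is the blade of [{0, ..., n-1, j}]. *)
Definition ext_set j : {set 'I_n.+2} := symdiff (initseg n.+2 n) [set j].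

Lemma ebig_cgen j : (n <= j)%N -> cmul (ebig n n) (cgen j) = blade (ext_set j).
Proof.
move=> nj; rewrite ebig_blade ?leqW // cgen_blade blade_mul clif_sign_initseg_set1 //.
by rewrite scale1r.
Qed.

Lemma f1_blade : f1 n = blade (ext_set (inord n)).
Proof. by rewrite /f1 /egen ebig_cgen // inordK. Qed.

Lemma f2_blade : f2 n = blade (ext_set (inord n.+1)).
Proof. by rewrite /f2 /egen ebig_cgen // inordK. Qed.

Lemma clif_sign_ext_set j k : (n <= j)%N -> (n <= k)%N ->
  clif_sign (ext_set j) (ext_set k)
  = (-1) ^+ (n * n.+1)./2 * (-1) ^+ n * swap_sign j k.
Proof.
move=> nj nk; rewrite clif_sign_symdiffl !clif_sign_symdiffr clif_sign_initseg //.
by rewrite clif_sign_initseg_set1 // clif_sign_set1_initseg // clif_sign_set1 mulr1 mulrA.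
Qed.

Lemma ext_blade_sqr j : (n <= j)%N ->
  cmul (blade (ext_set j)) (blade (ext_set j)) = cscal n.+2 (rsign n).
Proof.
move=> nj; rewrite blade_mul symdiffvv clif_sign_ext_set // /swap_sign leqnn.
by rewrite /rsign half_triangularS exprD exprS cscalE; congr (_ *: _); ring.
Qed.

Lemma ext_blade_anticomm j k : (n <= j < k)%N ->
  cmul (blade (ext_set k)) (blade (ext_set j))
  = - cmul (blade (ext_set j)) (blade (ext_set k)).
Proof.
case/andP=> nj jk; have nk := leq_trans nj (ltnW jk).
rewrite !blade_mul -scaleNr; congr (_ *: blade _); last exact: symdiffC.
by rewrite !clif_sign_ext_set // /swap_sign [(k <= j)%N]leqNgt jk (ltnW jk); ring.
Qed.

Lemma ext_blade_comm j x : ~~ odd n -> (n <= j)%N ->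
  (forall S, x S != 0 -> S \subset initseg n.+2 n) ->
  cmul x (blade (ext_set j)) = cmul (blade (ext_set j)) x.
Proof.
move=> even_n nj supp_x; have jI : j \notin initseg n.+2 n by rewrite inE -leqNgt.
apply: cmul_blade_comm => [S /supp_x /subset_trans-> //|].
  apply/subsetP => i iI; rewrite in_symdiff iI inE /=.
  by apply/eqP => ij; move: jI; rewrite -ij iI.
have -> : ext_set j = j |: initseg n.+2 n.
  apply/setP => i; rewrite in_symdiff !inE.
  by case: eqP => [->|_]; rewrite ?addbT ?addbF // -leqNgt nj.
by rewrite cardsU1 jI card_initseg ?leqW // add1n /= even_n.
Qed.

End ExtraGenerators.

Lemma f1_sqr n : cmul (f1 n) (f1 n) = cscal n.+2 (rsign n).
Proof. by rewrite f1_blade ext_blade_sqr // inordK. Qed.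

Lemma f2_sqr n : cmul (f2 n) (f2 n) = cscal n.+2 (rsign n).
Proof. by rewrite f2_blade ext_blade_sqr // inordK. Qed.

Lemma f2_f1 n : cmul (f2 n) (f1 n) = - mu n.
Proof. by rewrite /mu f1_blade f2_blade ext_blade_anticomm // !inordK // leqnn ltnSn. Qed.

Lemma mu_opp n : mu n = - cmul (f2 n) (f1 n).
Proof. by rewrite f2_f1 opprK. Qed.

Section Lift.

Variable n : nat.
Implicit Types (x y : clif n) (A B : {set 'I_n}) (S : {set 'I_n.+2}) (c : Cplx).

Definition widen2 : 'I_n -> 'I_n.+2 := widen_ord (leqW (leqnSn n)).

Lemma widen2_inj : injective widen2.
Proof. by move=> i j /(congr1 val) /= /val_inj. Qed.

Lemma widen2_initseg : [set widen2 i | i : 'I_n] = initseg n.+2 n.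
Proof.
apply/setP => i; rewrite !inE; apply/imsetP/idP => [[j _ ->]|ltin]; first exact: (ltn_ord j).
by exists (Ordinal ltin); rewrite // /widen2; apply: val_inj.
Qed.

Lemma lift_clifE x S : lift_clif x S =
  if S \subset initseg n.+2 n then x [set i : 'I_n | widen2 i \in S] else 0.
Proof. by rewrite ffunE -widen2_initseg. Qed.

Lemma lift_clif_supp x S : lift_clif x S != 0 -> S \subset initseg n.+2 n.
Proof. by rewrite lift_clifE; case: ifP; rewrite ?eqxx. Qed.

Lemma widen2_preimK S : S \subset initseg n.+2 n ->
  widen2 @: [set i | widen2 i \in S] = S.
Proof.
rewrite -widen2_initseg => /subsetP SI; apply/setP => i.
apply/imsetP/idP => [[j] | iS]; first by rewrite inE => jS ->.
by case/imsetP: (SI i iS) => j _ ij; exists j; rewrite // inE -ij.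
Qed.

Lemma widen2_imset_sub B : widen2 @: B \subset initseg n.+2 n.
Proof. by rewrite -widen2_initseg; apply/imsetS/subset_predT. Qed.

Lemma widen2_symdiff A B :
  widen2 @: symdiff A B = symdiff (widen2 @: A) (widen2 @: B).
Proof.
apply/setP => i; rewrite in_symdiff.
have [/imsetP[j _ ->]|iI] := boolP (i \in widen2 @: setT).
  by rewrite !mem_imset ?in_symdiff //; apply: widen2_inj.
have notin (C : {set 'I_n}) : (i \in widen2 @: C) = false.
  by apply: contraNF iI; apply: (subsetP (imsetS _ (subsetT C))).
by rewrite !notin.
Qed.

Lemma clif_sign_widen2 A B :
  clif_sign (widen2 @: A) (widen2 @: B) = clif_sign A B.
Proof.
have inj_widen2 C : {in C &, injective widen2} by move=> i j _ _; apply: widen2_inj.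
rewrite !clif_signE big_imset //=; apply: eq_bigr => a _.
by rewrite big_imset.
Qed.

Lemma lift_clifD x y : lift_clif (x + y) = lift_clif x + lift_clif y.
Proof.
by apply/ffunP => S; rewrite [in RHS]ffunE !lift_clifE; case: ifP; rewrite ?ffunE ?addr0.
Qed.

Lemma lift_clifZ c x : lift_clif (c *: x) = c *: lift_clif x.
Proof.
by apply/ffunP => S; rewrite clifZE !lift_clifE; case: ifP; rewrite ?clifZE ?mulr0.
Qed.

Lemma lift_clif0 : lift_clif (0 : clif n) = 0.
Proof. by apply: (addrI (lift_clif (0 : clif n))); rewrite -lift_clifD !addr0. Qed.

Lemma lift_clif_sum I r (P : pred I) (F : I -> clif n) :
  lift_clif (\sum_(i <- r | P i) F i) = \sum_(i <- r | P i) lift_clif (F i).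
Proof. by apply: big_morph; [apply: lift_clifD | apply: lift_clif0]. Qed.

Lemma lift_blade B : lift_clif (blade B) = blade (widen2 @: B).
Proof.
apply/ffunP => S; rewrite lift_clifE !ffunE.
case: ifP => [SI|]; last by case: eqP => // ->; rewrite widen2_imset_sub.
rewrite -{2}(widen2_preimK SI); congr (if _ then _ else _).
by apply/eqP/eqP => [->|/(imset_inj widen2_inj)].
Qed.

Lemma lift_cscal c : lift_clif (cscal n c) = cscal n.+2 c.
Proof.
by rewrite !cscalE lift_clifZ !cone_blade lift_blade imset0.
Qed.

Lemma lift_clif_mul x y :
  lift_clif (cmul x y) = cmul (lift_clif x) (lift_clif y).
Proof.
rewrite (clif_blade_expand x) (clif_blade_expand y) !cmul_suml !lift_clif_sum.
rewrite cmul_suml; apply: eq_bigr => A _.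
rewrite !cmul_sumr lift_clif_sum; apply: eq_bigr => B _.
move: (x A) (y B) => a b.
rewrite (lift_clifZ a) (lift_clifZ b) (cmulZl a) (cmulZr b) (cmulZl a) (cmulZr b).
rewrite (lift_clifZ a) (lift_clifZ b) blade_mul (lift_clifZ (clif_sign A B)).
by rewrite !lift_blade blade_mul widen2_symdiff clif_sign_widen2.
Qed.

End Lift.

(** * The decomposition [C_(n+2) = C_n + C_n f1 + C_n f2 + C_n mu] *)

Section Decomposition.

Variable n : nat.
Implicit Types (y : clif n) (S K : {set 'I_n.+2}).

Lemma lift_f1_comm y : ~~ odd n -> cmul (lift_clif y) (f1 n) = cmul (f1 n) (lift_clif y).
Proof.
by move=> even_n; rewrite f1_blade ext_blade_comm ?inordK // => S /lift_clif_supp.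
Qed.

Lemma lift_f2_comm y : ~~ odd n -> cmul (lift_clif y) (f2 n) = cmul (f2 n) (lift_clif y).
Proof.
by move=> even_n; rewrite f2_blade ext_blade_comm ?inordK // => S /lift_clif_supp.
Qed.

Lemma lift_mu_comm y : ~~ odd n -> cmul (lift_clif y) (mu n) = cmul (mu n) (lift_clif y).
Proof.
by move=> even_n; rewrite /mu cmulA lift_f1_comm // -cmulA lift_f2_comm // cmulA.
Qed.

Definition quat_comb (a0 a1 a2 a3 : clif n) : clif n.+2 :=
  lift_clif a0 + cmul (lift_clif a1) (f1 n)
  + cmul (lift_clif a2) (f2 n) + cmul (lift_clif a3) (mu n).

Lemma quat_combD (a0 a1 a2 a3 b0 b1 b2 b3 : clif n) :
  quat_comb a0 a1 a2 a3 + quat_comb b0 b1 b2 b3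
  = quat_comb (a0 + b0) (a1 + b1) (a2 + b2) (a3 + b3).
Proof.
rewrite /quat_comb !lift_clifD !cmulDl.
by rewrite [LHS]addrACA [X in X + _]addrACA [X in X + _ + _]addrACA.
Qed.

Lemma quat_combZ c (a0 a1 a2 a3 : clif n) :
  c *: quat_comb a0 a1 a2 a3 = quat_comb (c *: a0) (c *: a1) (c *: a2) (c *: a3).
Proof.
have cmul_liftZ x g : cmul (lift_clif (c *: x)) g = c *: cmul (lift_clif x) g.
  by rewrite lift_clifZ cmulZl.
by rewrite /quat_comb !cmul_liftZ lift_clifZ !scalerDr.
Qed.

Lemma blade_lift_factor S K : symdiff S K \subset initseg n.+2 n ->
  exists y, blade S = cmul (lift_clif y) (blade K).
Proof.
move=> SK; exists (clif_sign (symdiff S K) K *: blade [set i | widen2 i \in symdiff S K]).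
rewrite lift_clifZ lift_blade widen2_preimK // cmulZl blade_mul scalerA.
by rewrite clif_sign_sqr scale1r symdiffKr.
Qed.

Lemma quat_comb_blade S : exists a0 a1 a2 a3, blade S = quat_comb a0 a1 a2 a3.
Proof.
pose j1 : 'I_n.+2 := inord n; pose j2 : 'I_n.+2 := inord n.+1.
have split_at K : (j1 \in S) = (j1 \in K) -> (j2 \in S) = (j2 \in K) ->
    exists y, blade S = cmul (lift_clif y) (blade K).
  move=> e1 e2; apply: blade_lift_factor; apply/subsetP => i; rewrite in_symdiff inE.
  have [lt_in|] := ltnP i n; first by [].
  rewrite leq_eqVlt => /predU1P[ni|]; last rewrite leq_eqVlt => /predU1P[ni|].
  - have -> : i = j1 by apply: val_inj; rewrite /= inordK.
    by rewrite e1 addbb.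
  - have -> : i = j2 by apply: val_inj; rewrite /= inordK.
    by rewrite e2 addbb.
  - by rewrite ltnNge -ltnS ltn_ord.
have mem_ext (j k : 'I_n.+2) : (j \in ext_set k) = (j == k) (+) (j < n)%N.
  by rewrite /ext_set in_symdiff !inE addbC.
have j1j2 : (j1 == j2) = false by rewrite -val_eqE /= !inordK // eqn_leq ltnn andbF.
have in_j1 : (j1 < n)%N = false by rewrite inordK ?ltnn.
have in_j2 : (j2 < n)%N = false by rewrite inordK // ltnNge leqW.
have mu_blade : blade (symdiff (ext_set j1) (ext_set j2))
              = clif_sign (ext_set j1) (ext_set j2) *: mu n.
  by rewrite /mu f1_blade f2_blade blade_mul scalerA clif_sign_sqr scale1r.
have j2j1 : (j2 == j1) = false by rewrite eq_sym.
have memE := (mem_ext, in_symdiff, in_set0, eqxx, j1j2, j2j1, in_j1, in_j2).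
case e1: (j1 \in S); case e2: (j2 \in S).
- have [||y ->] := split_at (symdiff (ext_set j1) (ext_set j2)); rewrite ?e1 ?e2 ?memE //.
  exists 0, 0, 0, (clif_sign (ext_set j1) (ext_set j2) *: y).
  by rewrite mu_blade cmulZr -cmulZl -lift_clifZ /quat_comb lift_clif0 !cmul0l !add0r.
- have [||y ->] := split_at (ext_set j1); rewrite ?e1 ?e2 ?memE //.
  by exists 0, y, 0, 0; rewrite /quat_comb f1_blade lift_clif0 !cmul0l add0r !addr0.
- have [||y ->] := split_at (ext_set j2); rewrite ?e1 ?e2 ?memE //.
  by exists 0, 0, y, 0; rewrite /quat_comb f2_blade lift_clif0 !cmul0l !add0r addr0.
- have [||y ->] := split_at set0; rewrite ?e1 ?e2 ?memE //.
  by exists y, 0, 0, 0; rewrite /quat_comb -cone_blade cmul1r lift_clif0 !cmul0l !addr0.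
Qed.

Lemma quat_comb_surj (a : clif n.+2) :
  exists a0 a1 a2 a3, a = quat_comb a0 a1 a2 a3.
Proof.
rewrite (clif_blade_expand a).
apply: (big_ind (fun b => exists a0 a1 a2 a3, b = quat_comb a0 a1 a2 a3)).
- by exists 0, 0, 0, 0; rewrite /quat_comb lift_clif0 !cmul0l !addr0.
- move=> _ _ [a0 [a1 [a2 [a3 ->]]]] [b0 [b1 [b2 [b3 ->]]]].
  by rewrite quat_combD; do 4!eexists.
- move=> S _; have [a0 [a1 [a2 [a3 ->]]]] := quat_comb_blade S.
  by rewrite quat_combZ; do 4!eexists.
Qed.

End Decomposition.

(** * Split quaternions *)

(* In the application [u], [v], [w] are [e_[n]e_(n+1)], [e_[n]e_(n+2)] and
   [mu_(n+2)], which span a split quaternion algebra inside [C_(n+2)]. *)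
Section SplitQuaternions.

Variables (m : nat) (r : Cplx) (u v w : clif m).
Hypotheses (uu : cmul u u = r *: cone m) (vv : cmul v v = r *: cone m)
  (uv : cmul u v = w) (vu : cmul v u = - w).

(* [quat] is locked: otherwise [rewrite] compares distinct [quat] terms by
   unfolding them, which is prohibitively slow. *)
Definition quat_def (c0 c1 c2 c3 : Cplx) : clif m :=
  c0 *: cone m + c1 *: u + c2 *: v + c3 *: w.
Fact quat_key : unit. Proof. by []. Qed.
Definition quat := locked_with quat_key quat_def.

Lemma quatE c0 c1 c2 c3 : quat c0 c1 c2 c3 = c0 *: cone m + c1 *: u + c2 *: v + c3 *: w.
Proof. by rewrite /quat locked_withE. Qed.

Lemma quatD a0 a1 a2 a3 b0 b1 b2 b3 :
  quat a0 a1 a2 a3 + quat b0 b1 b2 b3 = quat (a0 + b0) (a1 + b1) (a2 + b2) (a3 + b3).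
Proof.
rewrite !quatE !scalerDl.
by rewrite [LHS]addrACA [X in X + _]addrACA [X in X + _ + _]addrACA.
Qed.

Lemma quatZ c a0 a1 a2 a3 :
  c *: quat a0 a1 a2 a3 = quat (c * a0) (c * a1) (c * a2) (c * a3).
Proof. by rewrite !quatE !scalerDr !scalerA. Qed.

Lemma quatN a0 a1 a2 a3 : - quat a0 a1 a2 a3 = quat (- a0) (- a1) (- a2) (- a3).
Proof. by rewrite -scaleN1r quatZ !mulN1r. Qed.

Lemma quat_scal c : c *: cone m = quat c 0 0 0.
Proof. by rewrite quatE !scale0r !addr0. Qed.

Lemma quat_u c : c *: u = quat 0 c 0 0.
Proof. by rewrite quatE !scale0r add0r !addr0. Qed.

Lemma quat_v c : c *: v = quat 0 0 c 0.
Proof. by rewrite quatE !scale0r !add0r addr0. Qed.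

Lemma quat_w c : c *: w = quat 0 0 0 c.
Proof. by rewrite quatE !scale0r !add0r. Qed.

Lemma cmul_uw : cmul u w = r *: v.
Proof. by rewrite -uv cmulA uu cmulZl cmul1l. Qed.

Lemma cmul_wu : cmul w u = - (r *: v).
Proof. by rewrite -uv -cmulA vu cmulNr cmul_uw. Qed.

Lemma cmul_wv : cmul w v = r *: u.
Proof. by rewrite -uv -cmulA vv cmulZr cmul1r. Qed.

Lemma cmul_vw : cmul v w = - (r *: u).
Proof. by rewrite -uv cmulA vu cmulNl cmul_wv. Qed.

Lemma cmul_ww : cmul w w = - ((r * r) *: cone m).
Proof. by rewrite -{2}uv cmulA cmul_wu cmulNl cmulZl vv scalerA. Qed.

Lemma quatM a0 a1 a2 a3 b0 b1 b2 b3 :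
  cmul (quat a0 a1 a2 a3) (quat b0 b1 b2 b3)
  = quat (a0 * b0 + r * a1 * b1 + r * a2 * b2 - r * r * a3 * b3)
         (a0 * b1 + a1 * b0 - r * a2 * b3 + r * a3 * b2)
         (a0 * b2 + a2 * b0 + r * a1 * b3 - r * a3 * b1)
         (a0 * b3 + a3 * b0 + a1 * b2 - a2 * b1).
Proof.
rewrite [quat a0 _ _ _]quatE [quat b0 _ _ _]quatE.
rewrite !(cmulDl, cmulDr, cmulZl, cmulZr) !(cmul1l, cmul1r).
rewrite uu vv uv vu cmul_uw cmul_vw cmul_wu cmul_wv cmul_ww !(scalerN, scalerA, scalerDr).
rewrite ?quat_scal ?quat_u ?quat_v ?quat_w !(quatN, quatD).
by congr quat; ring.
Qed.

End SplitQuaternions.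

Section CliffordMatrices.

Variable m : nat.

Lemma cmxmulE a b c (A : 'M[clif m]_(a, b)) (B : 'M[clif m]_(b, c)) i j :
  cmxmul A B i j = \sum_l cmul (A i l) (B l j).
Proof. by rewrite mxE. Qed.

Lemma cmx_lmulE a b x (A : 'M[clif m]_(a, b)) i j : cmx_lmul x A i j = cmul x (A i j).
Proof. by rewrite mxE. Qed.

Lemma cmx_rmulE a b x (A : 'M[clif m]_(a, b)) i j : cmx_rmul A x i j = cmul (A i j) x.
Proof. by rewrite mxE. Qed.

Lemma cmxmul_scalarr a b (A : 'M[clif m]_(a, b)) x :
  cmxmul A (cmx_scalar b x) = cmx_rmul A x.
Proof.
apply/matrixP => i j; rewrite cmxmulE cmx_rmulE (bigD1 j) //= mxE eqxx.
by rewrite big1 ?addr0 // => l; rewrite mxE eq_sym => /negbTE->; rewrite cmul0r.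
Qed.

Lemma cmxmul_rmul_cscal a b c (A : 'M[clif m]_(a, b)) (B : 'M[clif m]_(b, c)) d :
  cmxmul (cmx_rmul A (cscal m d)) B = cmx_lmul (cscal m d) (cmxmul A B).
Proof.
apply/matrixP => i j; rewrite cmx_lmulE !cmxmulE cmul_cscall scaler_sumr.
by apply: eq_bigr => l _; rewrite cmx_rmulE cmul_cscalr cmulZl.
Qed.

Lemma cmx1_block k : cmx1 m (k + k) = block_mx (cmx1 m k) 0 0 (cmx1 m k).
Proof.
apply/matrixP => i j; rewrite /cmx1 /cmx_scalar mxE.
by case: (split_ordP i) => {}i ->; case: (split_ordP j) => {}j ->;
  rewrite ?block_mxEul ?block_mxEur ?block_mxEdl ?block_mxEdr ?mxE ?eq_shift.
Qed.

Section BlockSandwich.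

Variables (k : nat) (c : Cplx) (U11 U12 U21 U22 : clif m).
Implicit Types (P Q : 'M[clif m]_k).

Definition lblock P : 'M[clif m]_(k + k) :=
  cmx_lmul (cscal m c) (block_mx (cmx_lmul U11 P) (cmx_lmul U12 P)
                                 (cmx_lmul U21 P) (cmx_lmul U22 P)).

Definition rblock Q : 'M[clif m]_(k + k) :=
  cmx_lmul (cscal m c) (block_mx (cmx_rmul Q U11) (cmx_rmul Q U12)
                                 (cmx_rmul Q U21) (cmx_rmul Q U22)).

Lemma lblock_scalar P a : cmxmul (lblock P) (cmx_scalar _ a) = lblock (cmx_rmul P a).
Proof.
rewrite cmxmul_scalarr; apply/matrixP => i j.
by case: (split_ordP i) => {}i ->; case: (split_ordP j) => {}j ->;
  rewrite !(cmx_lmulE, cmx_rmulE) ?block_mxEul ?block_mxEur ?block_mxEdl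
    ?block_mxEdr !(cmx_lmulE, cmx_rmulE) -!cmulA.
Qed.

Let sandwich (X Y : clif m) (M : 'M[clif m]_k) := cmx_rmul (cmx_lmul X M) Y.

Lemma lblock_rblock P Q :
  cmxmul (lblock P) (rblock Q) = cmx_lmul (cscal m (c * c)) (block_mx
    (sandwich U11 U11 (cmxmul P Q) + sandwich U12 U21 (cmxmul P Q))
    (sandwich U11 U12 (cmxmul P Q) + sandwich U12 U22 (cmxmul P Q))
    (sandwich U21 U11 (cmxmul P Q) + sandwich U22 U21 (cmxmul P Q))
    (sandwich U21 U12 (cmxmul P Q) + sandwich U22 U22 (cmxmul P Q))).
Proof.
have sandwichE X Y (M : 'M[clif m]_k) i j :
    sandwich X Y M i j = cmul (cmul X (M i j)) Y by rewrite cmx_rmulE cmx_lmulE.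
have term X Y p q : cmul (cmul (cscal m c) (cmul X p)) (cmul (cscal m c) (cmul q Y))
                    = (c * c) *: cmul (cmul X (cmul p q)) Y.
  by rewrite !cmul_cscall cmulZl cmulZr scalerA !cmulA.
apply/matrixP => i j.
case: (split_ordP i) => {}i ->; case: (split_ordP j) => {}j ->;
  rewrite cmxmulE big_split_ord /= cmx_lmulE ?block_mxEul ?block_mxEur
    ?block_mxEdl ?block_mxEdr [in RHS]mxE !sandwichE cmul_cscall scalerDr !cmxmulE;
  congr (_ + _); rewrite cmul_sumr cmul_suml scaler_sumr; apply: eq_bigr => l _;
  by rewrite !cmx_lmulE ?block_mxEul ?block_mxEur ?block_mxEdl ?block_mxEdr
    !(cmx_lmulE, cmx_rmulE) term.
Qed.

Lemma rblock_lblock Q P :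
  cmxmul (rblock Q) (lblock P) = cmx_lmul (cscal m (c * c)) (block_mx
    (cmxmul (cmx_rmul Q (cmul U11 U11 + cmul U12 U21)) P)
    (cmxmul (cmx_rmul Q (cmul U11 U12 + cmul U12 U22)) P)
    (cmxmul (cmx_rmul Q (cmul U21 U11 + cmul U22 U21)) P)
    (cmxmul (cmx_rmul Q (cmul U21 U12 + cmul U22 U22)) P)).
Proof.
have term X Y q p : cmul (cmul (cscal m c) (cmul q X)) (cmul (cscal m c) (cmul Y p))
                    = (c * c) *: cmul (cmul q (cmul X Y)) p.
  by rewrite !cmul_cscall cmulZl cmulZr scalerA !cmulA.
apply/matrixP => i j.
case: (split_ordP i) => {}i ->; case: (split_ordP j) => {}j ->;
  rewrite cmxmulE big_split_ord /= cmx_lmulE ?block_mxEul ?block_mxEur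
    ?block_mxEdl ?block_mxEdr cmxmulE cmul_cscall -big_split scaler_sumr /=;
  apply: eq_bigr => l _;
  by rewrite !cmx_lmulE ?block_mxEul ?block_mxEur ?block_mxEdl ?block_mxEdr
    !(cmx_lmulE, cmx_rmulE) !term -scalerDr cmulDr cmulDl.
Qed.

End BlockSandwich.

End CliffordMatrices.

(** * The recursion [P_n -> P_(n+2)] *)

Lemma map_lift_cmxmul n a b c (A : 'M[clif n]_(a, b)) (B : 'M[clif n]_(b, c)) :
  map_mx (@lift_clif n) (cmxmul A B)
  = cmxmul (map_mx (@lift_clif n) A) (map_mx (@lift_clif n) B).
Proof.
apply/matrixP => i j; rewrite mxE !cmxmulE lift_clif_sum.
by apply: eq_bigr => l _; rewrite lift_clif_mul !mxE.
Qed.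

Lemma map_lift_cmx1 n k : map_mx (@lift_clif n) (cmx1 n k) = cmx1 n.+2 k.
Proof.
apply/matrixP => i j; rewrite !mxE.
by case: eqP => _; rewrite ?lift_cscal ?lift_clif0.
Qed.

Section Recursion.

Variables (n : nat) (Pn Pninv : 'M[clif n]_(2 ^ n./2)) (s : Cplx).
Hypotheses (even_n : ~~ odd n) (Pn_inv : cmx_inverse Pn Pninv)
  (conj_scalar : forall (a : clif n) i j,
      is_cscal (cmxmul (cmxmul Pn (cmx_scalar (2 ^ n./2) a)) Pninv i j))
  (s_sqr : s ^+ 2 = rsign n).

Local Notation r := (rsign n).
Local Notation q := (quat (f1 n) (f2 n) (mu n)).
Local Notation P := (map_mx (@lift_clif n) Pn).
Local Notation Pinv := (map_mx (@lift_clif n) Pninv).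

Lemma quatM_f a0 a1 a2 a3 b0 b1 b2 b3 :
  cmul (q a0 a1 a2 a3) (q b0 b1 b2 b3)
  = q (a0 * b0 + r * a1 * b1 + r * a2 * b2 - r * r * a3 * b3)
      (a0 * b1 + a1 * b0 - r * a2 * b3 + r * a3 * b2)
      (a0 * b2 + a2 * b0 + r * a1 * b3 - r * a3 * b1)
      (a0 * b3 + a3 * b0 + a1 * b2 - a2 * b1).
Proof.
by apply: quatM; rewrite ?f1_sqr ?f2_sqr ?f2_f1 ?cscalE.
Qed.

Lemma cscal_quat c : cscal n.+2 c = q c 0 0 0.
Proof. by rewrite cscalE (quat_scal (f1 n) (f2 n) (mu n)). Qed.

Lemma s_neq0 : s != 0.
Proof.
apply/eqP => s0; move: s_sqr; rewrite s0 expr0n /= /rsign => /esym/eqP.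
by rewrite expf_eq0 oppr_eq0 oner_eq0 andbF.
Qed.

Lemma Pnext_coefE :
  [/\ q 1 s^-1 0 0 = cone n.+2 + cmul (cscal n.+2 s^-1) (ebig n n.+1),
      q 0 0 1 (- s^-1) = f2 n - cmul (cscal n.+2 s^-1) (mu n),
      q 0 0 r^-1 (r^-1 * s^-1)
        = cmul (cscal n.+2 r^-1) (f2 n + cmul (cscal n.+2 s^-1) (mu n))
    & q 1 (- s^-1) 0 0 = cone n.+2 - cmul (cscal n.+2 s^-1) (ebig n n.+1)].
Proof.
rewrite !cmul_cscall ebigS scalerDr scalerA -/(f1 n) !quatE !scale0r !scaleNr.
by split; rewrite ?scale1r ?add0r ?addr0.
Qed.

Lemma Pnext_lblock : Pnext s Pn = lblock 2^-1 (q 1 s^-1 0 0) (q 0 0 1 (- s^-1))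
  (q 0 0 r^-1 (r^-1 * s^-1)) (q 1 (- s^-1) 0 0) P.
Proof. by case: Pnext_coefE => -> -> -> ->. Qed.

Lemma Pprime_rblock : Pprime s Pninv = rblock 2^-1 (q 1 s^-1 0 0) (q 0 0 1 (- s^-1))
  (q 0 0 r^-1 (r^-1 * s^-1)) (q 1 (- s^-1) 0 0) Pinv.
Proof. by case: Pnext_coefE => -> -> -> ->. Qed.

Lemma conj_cscal (a : clif n) i j :
  \sum_l cmul (cmul (Pn i l) a) (Pninv l j) = cscal n (phi Pn Pninv a i j).
Proof.
rewrite /phi mxE /cpart -(conj_scalar a i j) cmxmulE.
by apply: eq_bigr => l _; rewrite cmxmul_scalarr cmx_rmulE.
Qed.

(* [g] commutes with the lifted entries of [P_n], so it can be pulled out of the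
   conjugation, which leaves the scalar [phi_n(a)_ij]. *)
Lemma conj_lift_comm (g : clif n.+2) (a : clif n) i j :
  (forall y, cmul (lift_clif y) g = cmul g (lift_clif y)) ->
  \sum_l cmul (cmul (P i l) (cmul (lift_clif a) g)) (Pinv l j)
  = phi Pn Pninv a i j *: g.
Proof.
move=> g_comm.
under eq_bigr do rewrite !mxE cmulA -cmulA -g_comm cmulA -!lift_clif_mul.
by rewrite -cmul_suml -lift_clif_sum conj_cscal lift_cscal cmul_cscall.
Qed.

Lemma conj_quat_comb a0 a1 a2 a3 :
  cmxmul (cmx_rmul P (quat_comb a0 a1 a2 a3)) Pinv
  = \matrix_(i, j) q (phi Pn Pninv a0 i j) (phi Pn Pninv a1 i j)
                     (phi Pn Pninv a2 i j) (phi Pn Pninv a3 i j).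
Proof.
apply/matrixP => i j; rewrite cmxmulE mxE quatE /quat_comb -[lift_clif a0]cmul1r.
under eq_bigr do rewrite cmx_rmulE !cmulDr !cmulDl.
rewrite !big_split /= !conj_lift_comm // => y.
- by rewrite lift_mu_comm.
- by rewrite lift_f2_comm.
- by rewrite lift_f1_comm.
- by rewrite cmul1l cmul1r.
Qed.

Lemma Pnext_conj a0 a1 a2 a3 :
  cmxmul (cmxmul (Pnext s Pn) (cmx_scalar _ (quat_comb a0 a1 a2 a3))) (Pprime s Pninv)
  = map_mx (cscal n.+2)
      (block_mx
         (phi Pn Pninv a0 + s *: phi Pn Pninv a1)
         (r *: (phi Pn Pninv a2 + s *: phi Pn Pninv a3))
         (phi Pn Pninv a2 - s *: phi Pn Pninv a3)
         (phi Pn Pninv a0 - s *: phi Pn Pninv a1)).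
Proof.
rewrite Pnext_lblock Pprime_rblock lblock_scalar lblock_rblock conj_quat_comb.
rewrite /cmx_lmul !map_block_mx; have s0 := s_neq0.
congr block_mx; apply/matrixP => i j; rewrite !mxE !quatM_f !quatD cmul_cscall.
all: by rewrite quatZ cscal_quat; congr q; rewrite -s_sqr; field.
Qed.

Lemma phi_cone : phi Pn Pninv (cone n) = 1%:M.
Proof.
rewrite /phi cmxmul_scalarr.
have -> : cmx_rmul Pn (cone n) = Pn by apply/matrixP => i j; rewrite mxE cmul1r.
case: Pn_inv => -> _.
by apply/matrixP => i j; rewrite !mxE /cpart; case: eqP => _; rewrite /cone ffunE ?eqxx.
Qed.

Lemma phi0 : phi Pn Pninv 0 = 0.
Proof.
rewrite /phi cmxmul_scalarr.
have -> : cmx_rmul Pn 0 = 0 by apply/matrixP => i j; rewrite !mxE cmul0r.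
apply/matrixP => i j; rewrite !mxE /cpart big1 ?ffunE // => l _.
by rewrite ?mxE cmul0l.
Qed.

Lemma Pnext_Pprime : cmxmul (Pnext s Pn) (Pprime s Pninv) = cmx1 n.+2 _.
Proof.
have := Pnext_conj (cone n) 0 0 0.
rewrite /quat_comb lift_clif0 !cmul0l !addr0 lift_cscal -/(cone _) cmxmul_scalarr.
have -> : cmx_rmul (Pnext s Pn) (cone n.+2) = Pnext s Pn.
  by apply/matrixP => i j; rewrite mxE cmul1r.
rewrite phi_cone phi0 !(scaler0, addr0, subr0) -scalar_mx_block => ->.
apply/matrixP => i j; rewrite !mxE; case: eqP => _ //.
by rewrite cscalE scale0r.
Qed.

Lemma Pnext_coef_sqr : [/\
    cmul (q 1 s^-1 0 0) (q 1 s^-1 0 0) + cmul (q 0 0 1 (- s^-1)) (q 0 0 r^-1 (r^-1 * s^-1))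
      = cscal n.+2 4,
    cmul (q 1 s^-1 0 0) (q 0 0 1 (- s^-1)) + cmul (q 0 0 1 (- s^-1)) (q 1 (- s^-1) 0 0)
      = cscal n.+2 0,
    cmul (q 0 0 r^-1 (r^-1 * s^-1)) (q 1 s^-1 0 0)
      + cmul (q 1 (- s^-1) 0 0) (q 0 0 r^-1 (r^-1 * s^-1)) = cscal n.+2 0
  & cmul (q 0 0 r^-1 (r^-1 * s^-1)) (q 0 0 1 (- s^-1))
      + cmul (q 1 (- s^-1) 0 0) (q 1 (- s^-1) 0 0) = cscal n.+2 4].
Proof.
have s0 := s_neq0.
by split; rewrite !quatM_f quatD cscal_quat; congr q; rewrite -?s_sqr; field.
Qed.

Lemma Pprime_Pnext : cmxmul (Pprime s Pninv) (Pnext s Pn) = cmx1 n.+2 _.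
Proof.
rewrite Pprime_rblock Pnext_lblock rblock_lblock.
case: Pnext_coef_sqr => -> -> -> ->.
rewrite !cmxmul_rmul_cscal -map_lift_cmxmul; case: Pn_inv => _ ->.
rewrite map_lift_cmx1 cmx1_block /cmx_lmul map_block_mx.
have quarter : 2^-1 * 2^-1 * 4 = 1 :> Cplx by field.
congr block_mx; apply/matrixP => i j; rewrite !mxE !cmul_cscall scalerA.
all: by rewrite ?quarter ?scale1r ?mulr0 ?scale0r.
Qed.

End Recursion.

Theorem theorem15 (n : nat) (hn : ~~ odd n)
  (Pn Pninv : 'M[clif n]_(2 ^ n./2))
  (hPinv : cmx_inverse Pn Pninv)
  (hphi : forall (a : clif n) (i j : 'I_(2 ^ n./2)),
      is_cscal ((cmxmul (cmxmul Pn (cmx_scalar (2 ^ n./2) a)) Pninv) i j))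
  (s : Cplx) (hs : s ^+ 2 = rsign n) :
  [/\ [/\ cmul (f1 n) (f1 n) = cscal n.+2 (rsign n),
          cmul (f2 n) (f2 n) = cscal n.+2 (rsign n)
        & mu n = - cmul (f2 n) (f1 n)],
      forall a : clif n.+2, exists a0 a1 a2 a3 : clif n,
        a = lift_clif a0 + cmul (lift_clif a1) (f1 n)
            + cmul (lift_clif a2) (f2 n) + cmul (lift_clif a3) (mu n),
      cmx_inverse (Pnext s Pn) (Pprime s Pninv)
    & forall (a : clif n.+2) (a0 a1 a2 a3 : clif n),
        a = lift_clif a0 + cmul (lift_clif a1) (f1 n)
            + cmul (lift_clif a2) (f2 n) + cmul (lift_clif a3) (mu n) ->
        cmxmul (cmxmul (Pnext s Pn) (cmx_scalar _ a)) (Pprime s Pninv)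
        = map_mx (cscal n.+2)
            (block_mx
               (phi Pn Pninv a0 + s *: phi Pn Pninv a1)
               (rsign n *: (phi Pn Pninv a2 + s *: phi Pn Pninv a3))
               (phi Pn Pninv a2 - s *: phi Pn Pninv a3)
               (phi Pn Pninv a0 - s *: phi Pn Pninv a1))].
Proof.
split.
- by split; [exact: f1_sqr | exact: f2_sqr | exact: mu_opp].
- exact: quat_comb_surj.
- by split; [exact: Pnext_Pprime | exact: Pprime_Pnext].
- by move=> a a0 a1 a2 a3 ->; exact: Pnext_conj.
Qed.
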